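(* Let $(X,\rho)$ be a complete, unbounded hyperbolic metric space and let $\omega:[0,+\infty)\to[0,+\infty)$ be a continuous, subadditive, nonzero and nondecreasing function with $\omega(0)=0$. Let $\mathcal{C}^{\mathrm{b}}_\omega(X)=\{f\in\mathcal{C}_\omega(X): \sup_{x,y\in X}\rho(f(x),f(y))<+\infty\}$ be endowed with the metric $d_\infty(f,g)=\sup_{x\in X}\rho(f(x),g(x))$. Then there is a $\sigma$-lower porous set $\mathcal{M}\subset\mathcal{C}^{\mathrm{b}}_\omega(X)$ such that for every $f\in\mathcal{C}^{\mathrm{b}}_\omega(X)\setminus\mathcal{M}$ one has $\omega_f(s)<\omega(s)$ for every $s\in(0,+\infty)$.
   Context: A metric space $(X,\rho)$ has a coherent system of geodesics $\Gamma$ if $\Gamma$ is a family of isometries $\gamma:[0,\rho(x,y)]\to X$ with $\gamma(0)=x$, $\gamma(\rho(x,y))=y$ such that: (1) for all $x,y$ there is a unique $\gamma\in\Gamma$ from $x$ to $y$; (2) if $\gamma\in\Gamma$ goes from $x$ to $y$, then $t\mapsto\gamma(\rho(x,y)-t)$ is the element of $\Gamma$ from $y$ to $x$; (3) if $\gamma\in\Gamma$ goes from $x$ to $y$ and $0\le t_1\le t_2\le\rho(x,y)$, then $t\mapsto\gamma(t+t_1)$ on $[0,t_2-t_1]$ is the element of $\Gamma$ from $\gamma(t_1)$ to $\gamma(t_2)$. Write $(1-t)x\oplus ty=\gamma(t\rho(x,y))$ with $\gamma\in\Gamma$ from $x$ to $y$. $X$ is hyperbolic if $\rho((1-t)x\oplus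 ty,(1-t)x\oplus tz)\le t\rho(y,z)$ for all $x,y,z\in X$, $t\in[0,1]$. The modulus of continuity of $f:X\to X$ is $\omega_f(s)=\sup\{\rho(f(x),f(y)):\rho(x,y)\le s\}$, and $\mathcal{C}_\omega(X)$ is the set of maps $f:X\to X$ with $\omega_f\le\omega$. In a metric space $(Y,d)$, a set $P$ is lower porous at $x\in Y$ if there are $\epsilon_0>0$, $\alpha>0$ such that for every $\epsilon\in(0,\epsilon_0]$ there is $y\in Y$ with $B(y,\alpha\epsilon)\subseteq B(x,\epsilon)\setminus P$ (open balls); $P$ is lower porous if it is lower porous at every $x\in Y$, and $\sigma$-lower porous if it is a countable union of lower porous sets. *)

From Stdlib Require Import Reals.
From Coquelicot Require Import Coquelicot.
Open Scope R_scope.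

Section Defs.
Context {X : Type} (rho : X -> X -> R).

Definition is_metric : Prop :=
  (forall x y, 0 <= rho x y) /\ (forall x y, rho x y = 0 <-> x = y) /\
  (forall x y, rho x y = rho y x) /\
  (forall x y z, rho x z <= rho x y + rho y z).

Definition complete_metric : Prop :=
  forall u : nat -> X,
    (forall eps, 0 < eps -> exists N, forall m n, (N <= m)%nat -> (N <= n)%nat ->
        rho (u m) (u n) < eps) ->
    exists l, forall eps, 0 < eps -> exists N, forall n, (N <= n)%nat -> rho (u n) l < eps.

Definition unbounded_metric : Prop := forall B : R, exists x y, B < rho x y.

(* A coherent system of geodesics: G x y is the unique element of Gamma from x to y,
   regarded as a map on [0, rho x y] (values outside that interval are irrelevant). *)
Definition coherent_geodesics (G : X -> X -> R -> X) : Prop :=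
  (forall x y s t, 0 <= s <= rho x y -> 0 <= t <= rho x y ->
     rho (G x y s) (G x y t) = Rabs (s - t)) /\
  (forall x y, G x y 0 = x /\ G x y (rho x y) = y) /\
  (forall x y t, 0 <= t <= rho x y -> G y x t = G x y (rho x y - t)) /\
  (forall x y t1 t2 t, 0 <= t1 -> t1 <= t2 -> t2 <= rho x y -> 0 <= t <= t2 - t1 ->
     G (G x y t1) (G x y t2) t = G x y (t + t1)).

Definition geo_comb (G : X -> X -> R -> X) (t : R) (x y : X) : X := G x y (t * rho x y).

Definition hyperbolic_with (G : X -> X -> R -> X) : Prop :=
  coherent_geodesics G /\
  forall x y z t, 0 <= t <= 1 ->
    rho (geo_comb G t x y) (geo_comb G t x z) <= t * rho y z.

Definition modulus (f : X -> X) (s : R) : Rbar :=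
  Lub_Rbar (fun r => exists x y, rho x y <= s /\ r = rho (f x) (f y)).

Definition C_omega (omega : R -> R) (f : X -> X) : Prop :=
  forall s, 0 <= s -> Rbar_le (modulus f s) (Finite (omega s)).

Definition Cb_omega (omega : R -> R) (f : X -> X) : Prop :=
  C_omega omega f /\ exists B : R, forall x y, rho (f x) (f y) <= B.

Definition d_inf (f g : X -> X) : R :=
  real (Lub_Rbar (fun r => exists x, r = rho (f x) (g x))).

End Defs.

(* Porosity in the metric space (S, d), where S is a predicate carving the space
   out of an ambient type T; balls are open balls of S. *)
Section Porosity.
Context {T : Type} (S : T -> Prop) (d : T -> T -> R).

Definition lower_porous_at (P : T -> Prop) (x : T) : Prop :=
  exists eps0 alpha, 0 < eps0 /\ 0 < alpha /\
    forall eps, 0 < eps <= eps0 ->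
      exists y, S y /\ forall z, S z -> d y z < alpha * eps -> d x z < eps /\ ~ P z.

Definition lower_porous (P : T -> Prop) : Prop :=
  forall x, S x -> lower_porous_at P x.

Definition sigma_lower_porous (P : T -> Prop) : Prop :=
  exists Q : nat -> T -> Prop,
    (forall n, lower_porous (Q n)) /\ (forall z, P z <-> exists n, Q n z).
End Porosity.

Definition admissible_omega (omega : R -> R) : Prop :=
  (forall s, 0 <= s -> 0 <= omega s) /\
  (forall s, 0 <= s -> forall eps, 0 < eps -> exists delta, 0 < delta /\
      forall t, 0 <= t -> Rabs (t - s) < delta -> Rabs (omega t - omega s) < eps) /\
  (forall s t, 0 <= s -> 0 <= t -> omega (s + t) <= omega s + omega t) /\
  (exists s, 0 <= s /\ omega s <> 0) /\
  (forall s t, 0 <= s -> s <= t -> omega s <= omega t) /\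
  omega 0 = 0.

From Stdlib Require Import Reals Lra Classical.
From Coquelicot Require Import Coquelicot.
Open Scope R_scope.

(* Pulling f towards one of its values along geodesics, g = (1 - t) f (+) t f(x0),
   moves f by at most t diam f(X) in d_inf, while hyperbolicity gives
   omega_g <= (1 - t) omega.  Every h with 2 d_inf(g, h) < t omega(1/(n+1)) then has
   omega_h(s) < omega(s) for all s >= 1/(n+1), and omega(1/(n+1)) > 0 because a
   subadditive nondecreasing omega vanishing at some positive point vanishes
   everywhere.  So the set of f with omega_f(s) = omega(s) for some s >= 1/(n+1) is
   lower porous, with constants uniform in f, and their union is the exceptional set. *)

Section LubRbar.
Variable E : R -> Prop.

Lemma Lub_Rbar_ub r : E r -> Rbar_le r (Lub_Rbar E).
Proof. exact (proj1 (Lub_Rbar_correct E) r). Qed.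

Lemma Lub_Rbar_le (c : Rbar) : (forall r, E r -> Rbar_le r c) -> Rbar_le (Lub_Rbar E) c.
Proof. exact (proj2 (Lub_Rbar_correct E) c). Qed.

Variables (r0 c : R).
Hypotheses (E_r0 : E r0) (E_bounded : forall r, E r -> r <= c).

Lemma Lub_Rbar_finite : Lub_Rbar E = Finite (real (Lub_Rbar E)).
Proof.
  pose proof (Lub_Rbar_ub r0 E_r0) as ge_r0.
  pose proof (Lub_Rbar_le c E_bounded) as le_c.
  now destruct (Lub_Rbar E).
Qed.

Lemma real_Lub_Rbar_le : real (Lub_Rbar E) <= c.
Proof.
  pose proof (Lub_Rbar_le c E_bounded) as le_c.
  now rewrite Lub_Rbar_finite in le_c.
Qed.

Lemma le_real_Lub_Rbar r : E r -> r <= real (Lub_Rbar E).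
Proof.
  intro Er. pose proof (Lub_Rbar_ub r Er) as ge_r.
  now rewrite Lub_Rbar_finite in ge_r.
Qed.
End LubRbar.

Section Metric.
Context {X : Type} (rho : X -> X -> R).
Hypothesis rho_metric : is_metric rho.

Lemma modulus_ge (f : X -> X) s x y :
  rho x y <= s -> Rbar_le (rho (f x) (f y)) (modulus rho f s).
Proof. intro Hxy. apply Lub_Rbar_ub. now exists x, y. Qed.

Lemma modulus_le (f : X -> X) s (c : Rbar) :
  (forall x y, rho x y <= s -> Rbar_le (rho (f x) (f y)) c) ->
  Rbar_le (modulus rho f s) c.
Proof. intro Hc. apply Lub_Rbar_le. intros r (x & y & Hxy & ->). now apply Hc. Qed.

Lemma C_omega_dist_le omega f s x y :
  C_omega rho omega f -> 0 <= s -> rho x y <= s -> rho (f x) (f y) <= omega s.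
Proof.
  intros Cf Hs Hxy.
  exact (Rbar_le_trans (rho (f x) (f y)) _ (omega s) (modulus_ge f s x y Hxy) (Cf s Hs)).
Qed.

Lemma Cb_omega_of_dist_le omega (f g : X -> X) :
  (forall x y, rho (g x) (g y) <= rho (f x) (f y)) ->
  Cb_omega rho omega f -> Cb_omega rho omega g.
Proof.
  intros Hgf [Cf [B HB]]. split.
  - intros s Hs. apply modulus_le. intros x y Hxy.
    apply (Rbar_le_trans _ (rho (f x) (f y))); [apply Hgf|].
    now apply (C_omega_dist_le omega f s).
  - exists B. intros x y. specialize (Hgf x y). specialize (HB x y). lra.
Qed.

Variable x0 : X.

Lemma d_inf_le (f g : X -> X) c :
  (forall x, rho (f x) (g x) <= c) -> d_inf rho f g <= c.
Proof.
  intro Hc. apply (real_Lub_Rbar_le _ (rho (f x0) (g x0))); [now exists x0|].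
  now intros r [x ->].
Qed.

Lemma dist_le_d_inf_of_bounded (f g : X -> X) c x :
  (forall y, rho (f y) (g y) <= c) -> rho (f x) (g x) <= d_inf rho f g.
Proof.
  intro Hc. apply (le_real_Lub_Rbar _ (rho (f x0) (g x0)) c); [now exists x0| |now exists x].
  now intros r [y ->].
Qed.

Lemma Cb_omega_dist_le_d_inf omega (f g : X -> X) x :
  Cb_omega rho omega f -> Cb_omega rho omega g -> rho (f x) (g x) <= d_inf rho f g.
Proof.
  destruct rho_metric as (_ & _ & _ & tri).
  intros [_ [Bf HBf]] [_ [Bg HBg]].
  apply (dist_le_d_inf_of_bounded f g (Bf + rho (f x0) (g x0) + Bg)). intro y.
  pose proof (tri (f y) (f x0) (g y)). pose proof (tri (f x0) (g x0) (g y)).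
  pose proof (HBf y x0). pose proof (HBg x0 y). lra.
Qed.

Lemma Cb_omega_d_inf_triangle omega (f g h : X -> X) :
  Cb_omega rho omega f -> Cb_omega rho omega g -> Cb_omega rho omega h ->
  d_inf rho f h <= d_inf rho f g + d_inf rho g h.
Proof.
  destruct rho_metric as (_ & _ & _ & tri).
  intros Cf Cg Ch. apply d_inf_le. intro x.
  pose proof (tri (f x) (g x) (h x)).
  pose proof (Cb_omega_dist_le_d_inf omega f g x Cf Cg).
  pose proof (Cb_omega_dist_le_d_inf omega g h x Cg Ch). lra.
Qed.

Lemma Cb_omega_modulus_le_d_inf omega (g h : X -> X) s c :
  Cb_omega rho omega g -> Cb_omega rho omega h ->
  (forall x y, rho x y <= s -> rho (g x) (g y) <= c) ->
  Rbar_le (modulus rho h s) (2 * d_inf rho g h + c).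
Proof.
  destruct rho_metric as (_ & _ & sym & tri).
  intros Cg Ch Hc. apply modulus_le. intros x y Hxy. simpl.
  pose proof (tri (h x) (g x) (h y)). pose proof (tri (g x) (g y) (h y)).
  rewrite (sym (h x) (g x)) in *.
  pose proof (Cb_omega_dist_le_d_inf omega g h x Cg Ch).
  pose proof (Cb_omega_dist_le_d_inf omega g h y Cg Ch).
  specialize (Hc x y Hxy). lra.
Qed.
End Metric.

Section Geodesics.
Context {X : Type} (rho : X -> X -> R) (G : X -> X -> R -> X).
Hypotheses (rho_metric : is_metric rho) (G_hyperbolic : hyperbolic_with rho G).

Lemma geo_comb_dist_left t a z :
  0 <= t <= 1 -> rho a (geo_comb rho G t a z) = t * rho a z.
Proof.
  destruct rho_metric as (nonneg & _). destruct G_hyperbolic as ((iso & ends & _) & _).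
  intro Ht. unfold geo_comb. pose proof (nonneg a z).
  rewrite <- (proj1 (ends a z)) at 1.
  rewrite iso by nra. rewrite Rabs_left1; nra.
Qed.

Lemma geo_comb_contract t a b z :
  0 <= t <= 1 ->
  rho (geo_comb rho G t a z) (geo_comb rho G t b z) <= (1 - t) * rho a b.
Proof.
  destruct rho_metric as (nonneg & _ & sym & _).
  destruct G_hyperbolic as ((_ & _ & rev & _) & hyp).
  intro Ht.
  assert (swap : forall a', geo_comb rho G t a' z = geo_comb rho G (1 - t) z a').
  { intro a'. unfold geo_comb. rewrite (sym a' z). pose proof (nonneg z a').
    rewrite (rev z a') by nra. f_equal. ring. }
  rewrite !swap. apply hyp. lra.
Qed.

Definition pull_towards (t : R) (z : X) (f : X -> X) : X -> X :=
  fun x => geo_comb rho G t (f x) z.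

Lemma pull_towards_contract t z f x y :
  0 <= t <= 1 ->
  rho (pull_towards t z f x) (pull_towards t z f y) <= (1 - t) * rho (f x) (f y).
Proof. apply geo_comb_contract. Qed.

Lemma Cb_omega_pull_towards omega t z f :
  0 <= t <= 1 -> Cb_omega rho omega f -> Cb_omega rho omega (pull_towards t z f).
Proof.
  destruct rho_metric as (nonneg & _).
  intro Ht. apply Cb_omega_of_dist_le. intros x y.
  pose proof (pull_towards_contract t z f x y Ht). pose proof (nonneg (f x) (f y)). nra.
Qed.

Lemma d_inf_pull_towards_le (x0 : X) t f B :
  0 <= t <= 1 -> (forall x y, rho (f x) (f y) <= B) ->
  d_inf rho f (pull_towards t (f x0) f) <= t * B.
Proof.
  intros Ht HB. apply (d_inf_le rho x0). intro x.
  unfold pull_towards. rewrite geo_comb_dist_left by exact Ht.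
  specialize (HB x x0). nra.
Qed.
End Geodesics.

Lemma admissible_omega_pos omega :
  admissible_omega omega -> forall s, 0 < s -> 0 < omega s.
Proof.
  intros (nonneg & _ & subadd & (s0 & Hs0 & nonzero) & mono & omega0) a Ha.
  destruct (Rle_lt_or_eq_dec 0 (omega a) (nonneg a (Rlt_le _ _ Ha))) as [|vanish]; [easy|].
  exfalso. apply nonzero.
  assert (multiples : forall k, omega (INR k * a) <= 0).
  { induction k as [|k IH].
    - rewrite Rmult_0_l, omega0. lra.
    - rewrite S_INR. replace ((INR k + 1) * a) with (INR k * a + a) by ring.
      pose proof (pos_INR k).
      pose proof (subadd (INR k * a) a ltac:(nra) ltac:(lra)). lra. }
  destruct (INR_unbounded (s0 / a)) as [k Hk].
  assert (s0_le : s0 <= INR k * a).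
  { assert (s0 / a * a = s0) by (field; lra). nra. }
  pose proof (mono s0 (INR k * a) Hs0 s0_le). pose proof (multiples k).
  pose proof (nonneg s0 Hs0). lra.
Qed.

Section Porosity.
Context {X : Type} (rho : X -> X -> R) (G : X -> X -> R -> X) (omega : R -> R).
Hypotheses (rho_metric : is_metric rho) (G_hyperbolic : hyperbolic_with rho G)
  (omega_admissible : admissible_omega omega).
Variable x0 : X.

Definition touches_omega (n : nat) (f : X -> X) : Prop :=
  Cb_omega rho omega f /\
  exists s, / (INR n + 1) <= s /\ ~ Rbar_lt (modulus rho f s) (Finite (omega s)).

Lemma modulus_lt_near_pull_towards t z f h s :
  0 <= t <= 1 -> 0 <= s -> Cb_omega rho omega f -> Cb_omega rho omega h ->
  2 * d_inf rho (pull_towards rho G t z f) h < t * omega s ->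
  Rbar_lt (modulus rho h s) (Finite (omega s)).
Proof.
  intros Ht Hs Cf Ch Hnear.
  apply (Rbar_le_lt_trans _ (2 * d_inf rho (pull_towards rho G t z f) h + (1 - t) * omega s)).
  - apply (Cb_omega_modulus_le_d_inf rho rho_metric x0 omega); auto.
    + now apply Cb_omega_pull_towards.
    + intros x y Hxy.
      pose proof (pull_towards_contract rho G rho_metric G_hyperbolic t z f x y Ht).
      pose proof (C_omega_dist_le rho omega f s x y (proj1 Cf) Hs Hxy). nra.
  - simpl. lra.
Qed.

Lemma touches_omega_lower_porous n :
  lower_porous (Cb_omega rho omega) (d_inf rho) (touches_omega n).
Proof.
  intros f Cf. pose proof Cf as [_ [B HB]].
  assert (B_nonneg : 0 <= B).
  { destruct rho_metric as (nonneg & _). pose proof (nonneg (f x0) (f x0)).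
    pose proof (HB x0 x0). lra. }
  set (w := omega (/ (INR n + 1))).
  assert (w_pos : 0 < w).
  { apply admissible_omega_pos; [easy|]. apply Rinv_0_lt_compat.
    pose proof (pos_INR n). lra. }
  set (K := B + 1).
  set (alpha := Rmin (1 / 2) (w / (8 * K))).
  assert (alpha_half : alpha <= 1 / 2) by apply Rmin_l.
  assert (alpha_w : alpha * (8 * K) <= w).
  { replace w with (w / (8 * K) * (8 * K)) by (field; unfold K; lra).
    apply Rmult_le_compat_r; [unfold K; lra | apply Rmin_r]. }
  assert (alpha_pos : 0 < alpha).
  { apply Rmin_pos; [lra|]. apply Rdiv_lt_0_compat; unfold K; lra. }
  exists K, alpha. split; [unfold K; lra|]. split; [exact alpha_pos|].
  intros eps [eps_pos eps_le].
  (* pulling f a distance proportional to eps clears a ball of radius alpha * eps *)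
  set (t := eps / (2 * K)).
  assert (t_def : t * (2 * K) = eps) by (unfold t; field; unfold K; lra).
  assert (Ht : 0 < t <= 1 / 2).
  { split; [apply Rdiv_lt_0_compat; unfold K in *; lra | unfold K in *; nra]. }
  set (g := pull_towards rho G t (f x0) f).
  assert (Cg : Cb_omega rho omega g) by (apply Cb_omega_pull_towards; auto; lra).
  exists g. split; [exact Cg|]. intros h Ch Hgh. split.
  - pose proof (Cb_omega_d_inf_triangle rho rho_metric x0 omega f g h Cf Cg Ch).
    assert (d_inf rho f g <= t * B) by (apply d_inf_pull_towards_le; auto; lra).
    assert (t * B < eps / 2) by (unfold K in t_def; nra).
    assert (alpha * eps <= eps / 2) by nra.
    lra.
  - intros [_ (s & Hs & not_lt)]. apply not_lt.
    assert (Hs0 : 0 < / (INR n + 1)) by (apply Rinv_0_lt_compat; pose proof (pos_INR n); lra).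
    assert (w_le : w <= omega s).
    { destruct omega_admissible as (_ & _ & _ & _ & mono & _). apply mono; lra. }
    apply (modulus_lt_near_pull_towards t (f x0) f); auto; [lra|lra|].
    assert (alpha * eps * 4 <= t * w) by (rewrite <- t_def; nra).
    assert (t * w <= t * omega s) by nra.
    assert (0 < t * w) by nra.
    fold g. lra.
Qed.
End Porosity.

Lemma exists_inv_succ_le s : 0 < s -> exists n, / (INR n + 1) <= s.
Proof.
  intro Hs. destruct (INR_unbounded (/ s)) as [n Hn]. exists n.
  pose proof (pos_INR n).
  rewrite <- (Rinv_inv s). apply Rlt_le, Rinv_lt_contravar.
  - apply Rmult_lt_0_compat; [apply Rinv_0_lt_compat|]; lra.
  - lra.
Qed.

Theorem theorem4p1 (X : Type) (rho : X -> X -> R) (G : X -> X -> R -> X)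
  (omega : R -> R) :
  is_metric rho -> complete_metric rho -> unbounded_metric rho ->
  hyperbolic_with rho G -> admissible_omega omega ->
  exists M : (X -> X) -> Prop,
    (forall f, M f -> Cb_omega rho omega f) /\
    sigma_lower_porous (Cb_omega rho omega) (d_inf rho) M /\
    forall f, Cb_omega rho omega f -> ~ M f ->
      forall s, 0 < s -> Rbar_lt (modulus rho f s) (Finite (omega s)).
Proof.
  intros rho_metric _ rho_unbounded G_hyperbolic omega_admissible.
  destruct (rho_unbounded 0) as (x0 & _).
  exists (fun f => exists n, touches_omega rho omega n f). split; [|split].
  - now intros f [n [Cf _]].
  - exists (touches_omega rho omega). split; [|easy].
    intro n. now apply (touches_omega_lower_porous rho G).
  - intros f Cf not_touches s Hs.
    destruct (exists_inv_succ_le s Hs) as [n Hn].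
    apply NNPP. intro not_lt. apply not_touches. exists n.
    split; [exact Cf|]. now exists s.
Qed.
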